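(* For every $0<s\le1$, $$\min\Big\{1-\sum_{i=1}^dp_i^2\;:\;p\in\Delta_d,\ \mathcal{E}_\star(p)\ge s\Big\}=s\,\frac{d-1}{d}.$$
   Context: $d\ge2$. $\Delta_d$ is the set of probability vectors $p=(p_1,\dots,p_d)$, $p_i\ge0$, $\sum_ip_i=1$. With the stellar spectrum $\lambda_j=e^{i\theta_j}$, $\theta_j=\frac{(d-2j+1)\pi}{d}$, define for a probability vector $p$: $\mathcal{E}_\star(p)=\min_{\sigma\in S_d}\big(1-\big|\sum_{i=1}^d\lambda_ip_{\sigma(i)}\big|^2\big)$. *)

From Stdlib Require Import Reals.
From mathcomp Require Import all_boot all_fingroup.
Set Implicit Arguments.
Unset Strict Implicit.
Unset Printing Implicit Defensive.

Local Open Scope R_scope.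

Definition rsum (d : nat) (f : 'I_d -> R) : R := \big[Rplus/0]_(i < d) f i.

Definition prob_vec (d : nat) (p : 'I_d -> R) : Prop :=
  (forall i, 0 <= p i) /\ rsum (fun i => p i) = 1.

(* Stellar angles, 0-based index j : 'I_d  (paper's index is j+1):
   theta_{j+1} = (d - 2(j+1) + 1) pi / d = (d - 2 j - 1) pi / d. *)
Definition theta (d : nat) (j : 'I_d) : R :=
  (INR d - 2 * INR (nat_of_ord j) - 1) * PI / INR d.

(* |sum_i lambda_i p_{sigma(i)}|^2 with lambda_i = e^{i theta_i},
   written as (real part)^2 + (imaginary part)^2. *)
Definition stellar_abs2 (d : nat) (p : 'I_d -> R) (s : 'S_d) : R :=
  (rsum (fun i => cos (theta i) * p (s i))) ^ 2
  + (rsum (fun i => sin (theta i) * p (s i))) ^ 2.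

(* E_star(p) = min over sigma in S_d of 1 - |...|^2
   (fold of Rmin over the explicit enumeration of S_d, seeded with the
    value at the identity permutation, which is itself in the enumeration). *)
Definition E_star (d : nat) (p : 'I_d -> R) : R :=
  let g := fun s : 'S_d => 1 - stellar_abs2 p s in
  foldr Rmin (g 1%g) (map g (enum [set: 'S_d])).

From Stdlib Require Import Reals Lra.
From HB Require Import structures.
From mathcomp Require Import all_boot all_fingroup.
Set Implicit Arguments.
Unset Strict Implicit.
Unset Printing Implicit Defensive.

Local Open Scope R_scope.

(* Average |sum_i lambda_i p_(sigma i)|^2 over all sigma in S_d.  Expanding
   the square, only the pair moments sum_sigma p_(sigma i) p_(sigma j) occur,
   and since S_d is doubly transitive they take one value on the diagonal and
   one off it.  As sum_i lambda_i = 0 and |lambda_i| = 1, the average collapses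
   to (d sum_i p_i^2 - 1) / (d - 1); the minimum E_star(p) is at most the
   average, which is the bound (d - 1) E_star(p) <= d (1 - sum_i p_i^2).
   Equality holds for p = u e_1 + (1 - u)/d (1, ..., 1) with u^2 = 1 - s:
   sum_i lambda_i = 0 kills the uniform part, so |...|^2 = u^2 for every
   sigma. *)

Lemma RplusA : associative Rplus.
Proof. by move=> x y z; rewrite Rplus_assoc. Qed.

HB.instance Definition _ :=
  Monoid.isComLaw.Build R 0 Rplus RplusA Rplus_comm Rplus_0_l.
HB.instance Definition _ := Monoid.isMulLaw.Build R 0 Rmult Rmult_0_l Rmult_0_r.
HB.instance Definition _ :=
  Monoid.isAddLaw.Build R Rmult Rplus Rmult_plus_distr_r Rmult_plus_distr_l.

Lemma sumR_const (T : finType) (c : R) : \big[Rplus/0]_(x : T) c = INR #|T| * c.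
Proof.
rewrite big_const; elim: #|T| => [|n IH]; first by rewrite /=; lra.
by rewrite iterS IH S_INR; lra.
Qed.

(* [big_split] states its right-hand side with the monoid structure, which
   [ring] and [lra] do not see through; this version uses [Rplus] itself. *)
Lemma sumR_add (T : finType) (F G : T -> R) :
  \big[Rplus/0]_(x : T) (F x + G x)
  = \big[Rplus/0]_(x : T) F x + \big[Rplus/0]_(x : T) G x.
Proof. exact: big_split. Qed.

Lemma rsum_const d (c : R) : rsum (fun _ : 'I_d => c) = INR d * c.
Proof. by rewrite /rsum sumR_const card_ord. Qed.

Lemma sumR_le (T : finType) (F G : T -> R) :
  (forall x, F x <= G x) -> \big[Rplus/0]_(x : T) F x <= \big[Rplus/0]_(x : T) G x.
Proof. by move=> FG; apply: (big_ind2 Rle) => // *; lra. Qed.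

Lemma rsum_sqr d (f : 'I_d -> R) :
  rsum f ^ 2 = rsum (fun i => rsum (fun j => f i * f j)).
Proof.
rewrite /rsum (_ : forall x, x ^ 2 = x * x); last by move=> x; ring.
by rewrite big_distrl; apply: eq_bigr => i _; rewrite big_distrr.
Qed.

Lemma rsum_perm d (s : 'S_d) (f : 'I_d -> R) : rsum (fun i => f (s i)) = rsum f.
Proof. by rewrite /rsum [RHS](reindex_inj (@perm_inj _ s)). Qed.

Lemma INR_ge2 d : (2 <= d)%N -> 2 <= INR d.
Proof. by move=> hd; apply: (le_INR 2); apply/leP. Qed.

Lemma sin_mul_sum_cos (x a : R) n :
  2 * sin a * \big[Rplus/0]_(j < n) cos (x - (2 * INR j + 1) * a)
  = sin x - sin (x - 2 * INR n * a).
Proof.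
elim: n => [|n IH].
  by rewrite big_ord0 (_ : x - 2 * INR 0 * a = x) /=; lra.
rewrite big_ord_recr /= Rmult_plus_distr_l IH.
set y := x - (2 * INR n + 1) * a.
rewrite (_ : x - 2 * INR n * a = y + a); last by rewrite /y; ring.
rewrite (_ : x - 2 * INR n.+1 * a = y - a); last by rewrite /y S_INR; ring.
rewrite sin_plus sin_minus; ring.
Qed.

Lemma sin_mul_sum_sin (x a : R) n :
  2 * sin a * \big[Rplus/0]_(j < n) sin (x - (2 * INR j + 1) * a)
  = cos (x - 2 * INR n * a) - cos x.
Proof.
elim: n => [|n IH].
  by rewrite big_ord0 (_ : x - 2 * INR 0 * a = x) /=; lra.
rewrite big_ord_recr /= Rmult_plus_distr_l IH.
set y := x - (2 * INR n + 1) * a.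
rewrite (_ : x - 2 * INR n * a = y + a); last by rewrite /y; ring.
rewrite (_ : x - 2 * INR n.+1 * a = y - a); last by rewrite /y S_INR; ring.
rewrite cos_plus cos_minus; ring.
Qed.

Section StellarSpectrum.

Variables (d : nat) (hd : (2 <= d)%N).

Lemma theta_arith (j : 'I_d) : theta j = PI - (2 * INR j + 1) * (PI / INR d).
Proof. by rewrite /theta; field; have := INR_ge2 hd; lra. Qed.

Lemma sin_PI_div_neq0 : sin (PI / INR d) <> 0.
Proof.
have d2 := INR_ge2 hd; have pi0 := PI_RGT_0.
apply: Rgt_not_eq; apply: sin_gt_0; first by apply: Rdiv_lt_0_compat; lra.
by apply: (Rmult_lt_reg_r (INR d)); [lra | rewrite /Rdiv Rmult_assoc Rinv_l; nra].
Qed.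

Lemma PI_sub_2PI : PI - 2 * INR d * (PI / INR d) = - PI.
Proof. by field; have := INR_ge2 hd; lra. Qed.

Lemma sum_cos_theta : rsum (fun i : 'I_d => cos (theta i)) = 0.
Proof.
apply: (Rmult_eq_reg_l (2 * sin (PI / INR d))); last by have := sin_PI_div_neq0; lra.
rewrite /rsum (eq_bigr _ (fun j _ => congr1 cos (theta_arith j))).
by rewrite sin_mul_sum_cos PI_sub_2PI sin_neg sin_PI; lra.
Qed.

Lemma sum_sin_theta : rsum (fun i : 'I_d => sin (theta i)) = 0.
Proof.
apply: (Rmult_eq_reg_l (2 * sin (PI / INR d))); last by have := sin_PI_div_neq0; lra.
rewrite /rsum (eq_bigr _ (fun j _ => congr1 sin (theta_arith j))).
by rewrite sin_mul_sum_sin PI_sub_2PI cos_neg; lra.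
Qed.

End StellarSpectrum.

Lemma foldr_Rmin_map_le (T : eqType) (g : T -> R) x0 (l : seq T) t :
  t \in l -> foldr Rmin x0 (map g l) <= g t.
Proof.
elim: l => [|a l IH] //=; rewrite in_cons => /orP [/eqP <- | tl].
  exact: Rmin_l.
by apply: Rle_trans (IH tl); apply: Rmin_r.
Qed.

Lemma foldr_Rmin_map_ge (T : Type) (g : T -> R) x0 (l : seq T) y :
  y <= x0 -> (forall t, y <= g t) -> y <= foldr Rmin x0 (map g l).
Proof. by move=> y_x0 y_g; elim: l => [|a l IH] //=; apply: Rmin_glb. Qed.

Lemma E_star_le d (p : 'I_d -> R) (s : 'S_d) : E_star p <= 1 - stellar_abs2 p s.
Proof. by apply: foldr_Rmin_map_le; rewrite mem_enum in_setT. Qed.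

Lemma E_star_ge d (p : 'I_d -> R) x :
  (forall s : 'S_d, x <= 1 - stellar_abs2 p s) -> x <= E_star p.
Proof. by move=> x_le; apply: foldr_Rmin_map_ge; first exact: x_le. Qed.

Lemma perm_map_pair (T : finType) (i j i' j' : T) :
  i != j -> i' != j' -> exists t : {perm T}, t i = i' /\ t j = j'.
Proof.
move=> ij ij'; set k := tperm i i' j.
have i'k : i' != k.
  apply/eqP => e; move: ij; rewrite -(inj_eq (@perm_inj _ (tperm i i'))).
  by rewrite -/k -e tpermL eqxx.
exists (tperm i i' * tperm k j')%g; rewrite !permM !tpermL; split=> //.
by rewrite tpermD // eq_sym.
Qed.

Section PairMoments.

Variables (d : nat) (p : 'I_d -> R).

Definition pair_moment (i j : 'I_d) : R := \big[Rplus/0]_(s : 'S_d) (p (s i) * p (s j)).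

Lemma pair_moment_perm (t : 'S_d) i j : pair_moment (t i) (t j) = pair_moment i j.
Proof.
rewrite /pair_moment [RHS](reindex_inj (mulgI t)).
by apply: eq_bigr => s _; rewrite !permM.
Qed.

Lemma pair_moment_diag i j : pair_moment i i = pair_moment j j.
Proof. by rewrite -(pair_moment_perm (tperm i j) j j) tpermR. Qed.

Lemma pair_moment_offdiag i j i' j' :
  i != j -> i' != j' -> pair_moment i j = pair_moment i' j'.
Proof.
move=> ij ij'; have [t [<- <-]] := perm_map_pair ij ij'.
by rewrite pair_moment_perm.
Qed.

Lemma sum_pair_moment_diag :
  rsum (fun i => pair_moment i i) = INR #|'S_d| * rsum (fun i => p i ^ 2).
Proof.
rewrite /rsum /pair_moment exchange_big /= -sumR_const; apply: eq_bigr => s _.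
rewrite -[\big[Rplus/0]_(i < d) p i ^ 2]/(rsum (fun i => p i ^ 2)) -(rsum_perm s).
by apply: eq_bigr => i _; ring.
Qed.

Lemma sum_pair_moment :
  rsum (fun i => rsum (fun j => pair_moment i j)) = INR #|'S_d| * rsum p ^ 2.
Proof.
rewrite /rsum /pair_moment.
under eq_bigr do rewrite exchange_big.
rewrite exchange_big -sumR_const; apply: eq_bigr => s _.
by rewrite -[\big[Rplus/0]_(i < d) p i]/(rsum p) -(rsum_perm s) rsum_sqr.
Qed.

Lemma perm_sum_sqr (c : 'I_d -> R) :
  \big[Rplus/0]_(s : 'S_d) rsum (fun i => c i * p (s i)) ^ 2
  = rsum (fun i => rsum (fun j => c i * c j * pair_moment i j)).
Proof.
under eq_bigr do rewrite rsum_sqr.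
rewrite /rsum /pair_moment exchange_big; apply: eq_bigr => i _.
rewrite exchange_big; apply: eq_bigr => j _.
by rewrite big_distrr; apply: eq_bigr => s _ /=; ring.
Qed.

Lemma pair_moment_split i0 i1 : i0 != i1 -> forall i j,
  pair_moment i j = pair_moment i0 i1
                    + (if j == i then pair_moment i0 i0 - pair_moment i0 i1 else 0).
Proof.
move=> i01 i j; case: eqP => [-> | /eqP ji].
  by rewrite (pair_moment_diag i i0); ring.
by rewrite eq_sym in ji; rewrite (pair_moment_offdiag ji i01); ring.
Qed.

Lemma perm_sum_sqr_zero_mean (c : 'I_d -> R) : (2 <= d)%N ->
  rsum c = 0 -> rsum p = 1 ->
  INR d * (INR d - 1) * \big[Rplus/0]_(s : 'S_d) rsum (fun i => c i * p (s i)) ^ 2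
  = INR #|'S_d| * (INR d * rsum (fun i => p i ^ 2) - 1) * rsum (fun i => c i ^ 2).
Proof.
move=> hd c0 p1; have i01 : Ordinal (ltnW hd) != Ordinal hd by [].
set mdiag := pair_moment (Ordinal (ltnW hd)) (Ordinal (ltnW hd)).
set moff := pair_moment (Ordinal (ltnW hd)) (Ordinal hd).
have sum_diag : INR d * mdiag = INR #|'S_d| * rsum (fun i => p i ^ 2).
  rewrite -sum_pair_moment_diag -rsum_const /rsum; apply: eq_bigr => i _.
  exact: pair_moment_diag.
have sum_all : INR d * (INR d * moff + (mdiag - moff)) = INR #|'S_d|.
  have := sum_pair_moment; rewrite p1 pow1 Rmult_1_r => <-.
  rewrite -rsum_const /rsum; apply: eq_bigr => i _.
  rewrite (eq_bigr _ (fun j _ => pair_moment_split i01 i j)) sumR_add.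
  by rewrite sumR_const card_ord -big_mkcond big_pred1_eq.
have quad : rsum (fun i => rsum (fun j => c i * c j * pair_moment i j))
            = (mdiag - moff) * rsum (fun i => c i ^ 2).
  have e i j : c i * c j * pair_moment i j
               = c i * moff * c j + (if j == i then (mdiag - moff) * c i ^ 2 else 0).
    by rewrite (pair_moment_split i01 i j) -/mdiag -/moff; case: eqP => [-> | _]; ring.
  move: c0; rewrite /rsum big_distrr => c0; apply: eq_bigr => i _.
  rewrite (eq_bigr _ (fun j _ => e i j)) sumR_add -big_distrr c0.
  by rewrite -big_mkcond big_pred1_eq /=; ring.
have key : INR d * (INR d - 1) * (mdiag - moff)
           = INR #|'S_d| * (INR d * rsum (fun i => p i ^ 2) - 1).
  transitivity (INR d * (INR d * mdiag) - INR d * (INR d * moff + (mdiag - moff))).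
    by ring.
  by rewrite sum_diag sum_all; ring.
by rewrite perm_sum_sqr quad -key; ring.
Qed.

End PairMoments.

Lemma sum_stellar_abs2 d (p : 'I_d -> R) : (2 <= d)%N -> rsum p = 1 ->
  (INR d - 1) * \big[Rplus/0]_(s : 'S_d) stellar_abs2 p s
  = INR #|'S_d| * (INR d * rsum (fun i => p i ^ 2) - 1).
Proof.
move=> hd p1; have d2 := INR_ge2 hd.
have hc := perm_sum_sqr_zero_mean hd (sum_cos_theta hd) p1.
have hs := perm_sum_sqr_zero_mean hd (sum_sin_theta hd) p1.
have unit : rsum (fun i : 'I_d => cos (theta i) ^ 2)
             + rsum (fun i : 'I_d => sin (theta i) ^ 2) = INR d.
  transitivity (\big[Rplus/0]_(i < d) (cos (theta i) ^ 2 + sin (theta i) ^ 2)).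
    by rewrite sumR_add.
  rewrite (_ : INR d = rsum (fun _ : 'I_d => 1)); last by rewrite rsum_const Rmult_1_r.
  apply: eq_bigr => i _.
  by have := sin2_cos2 (theta i); rewrite /Rsqr /=; lra.
apply: (Rmult_eq_reg_l (INR d)); last lra.
rewrite /stellar_abs2 sumR_add !Rmult_plus_distr_l -!Rmult_assoc hc hs.
by rewrite -Rmult_plus_distr_l unit; ring.
Qed.

Lemma E_star_linear_entropy_bound d (p : 'I_d -> R) : (2 <= d)%N -> prob_vec p ->
  (INR d - 1) * E_star p <= INR d * (1 - rsum (fun i => p i ^ 2)).
Proof.
move=> hd [_ p1]; have d2 := INR_ge2 hd.
have N0 : 0 < INR #|'S_d| by apply: lt_0_INR; apply/ltP; rewrite card_Sn fact_gt0.
have avg : INR #|'S_d| * E_star p + \big[Rplus/0]_(s : 'S_d) stellar_abs2 p s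
           <= INR #|'S_d|.
  rewrite -[X in _ <= X]Rmult_1_r -!sumR_const -sumR_add.
  by apply: sumR_le => s; have := E_star_le p s; lra.
have hsum := sum_stellar_abs2 (p := p) hd p1.
apply: (Rmult_le_reg_l (INR #|'S_d|)) => //.
by have := Rmult_le_compat_l (INR d - 1) _ _ ltac:(lra) avg; lra.
Qed.

Lemma linear_entropy_lower_bound d (p : 'I_d -> R) s : (2 <= d)%N -> prob_vec p ->
  s <= E_star p -> s * (INR d - 1) / INR d <= 1 - rsum (fun i => p i ^ 2).
Proof.
move=> hd hp sE; have d2 := INR_ge2 hd.
have bound := E_star_linear_entropy_bound hd hp.
apply: (Rmult_le_reg_l (INR d)); first lra.
rewrite (_ : INR d * (s * (INR d - 1) / INR d) = (INR d - 1) * s); last by field; lra.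
nra.
Qed.

Definition spike d (k : 'I_d) (u c : R) (i : 'I_d) : R := (if i == k then u else 0) + c.

Lemma rsum_spike d (k : 'I_d) u c : rsum (spike k u c) = u + INR d * c.
Proof.
by rewrite /rsum /spike sumR_add -big_mkcond big_pred1_eq sumR_const card_ord.
Qed.

Lemma rsum_spike_sqr d (k : 'I_d) u c :
  rsum (fun i => spike k u c i ^ 2) = u ^ 2 + 2 * u * c + INR d * c ^ 2.
Proof.
have e i : spike k u c i ^ 2 = (if i == k then u ^ 2 + 2 * u * c else 0) + c ^ 2.
  by rewrite /spike; case: eqP => _; ring.
rewrite /rsum (eq_bigr _ (fun i _ => e i)) sumR_add -big_mkcond big_pred1_eq.
by rewrite sumR_const card_ord; ring.
Qed.

Lemma rsum_mul_spike d (f : 'I_d -> R) (k : 'I_d) u c (s : 'S_d) :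
  rsum f = 0 -> rsum (fun i => f i * spike k u c (s i)) = u * f ((s^-1)%g k).
Proof.
have e i : f i * spike k u c (s i)
           = (if i == (s^-1)%g k then u * f i else 0) + c * f i.
  by rewrite /spike -[i == _](inj_eq (@perm_inj _ s)) permKV; case: eqP => _; ring.
rewrite /rsum => f0; rewrite (eq_bigr _ (fun i _ => e i)) sumR_add -big_distrr f0.
by rewrite -big_mkcond big_pred1_eq /=; ring.
Qed.

Lemma stellar_abs2_spike d (k : 'I_d) u c (s : 'S_d) : (2 <= d)%N ->
  stellar_abs2 (spike k u c) s = u ^ 2.
Proof.
move=> hd; rewrite /stellar_abs2.
rewrite !rsum_mul_spike ?sum_cos_theta ?sum_sin_theta //.
have := sin2_cos2 (theta ((s^-1)%g k)); rewrite /Rsqr => unit.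
by rewrite -[u ^ 2]Rmult_1_r -unit; ring.
Qed.

Lemma linear_entropy_bound_attained d s : (2 <= d)%N -> 0 < s <= 1 ->
  exists p : 'I_d -> R, prob_vec p /\ s <= E_star p /\
    1 - rsum (fun i => p i ^ 2) = s * (INR d - 1) / INR d.
Proof.
move=> hd hs; have d2 := INR_ge2 hd.
have [u [u0 [u1 uu]]] : exists u, 0 <= u /\ u <= 1 /\ u ^ 2 = 1 - s.
  exists (sqrt (1 - s)); split; first exact: sqrt_pos.
  split; last by rewrite pow2_sqrt; lra.
  by rewrite -[X in _ <= X]sqrt_1; apply: sqrt_le_1_alt; lra.
exists (spike (Ordinal (ltnW hd)) u ((1 - u) / INR d)); split; [split | split].
- move=> i; rewrite /spike /Rdiv; apply: Rplus_le_le_0_compat.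
    by case: eqP; lra.
  by apply: Rmult_le_pos; [lra | apply/Rlt_le/Rinv_0_lt_compat; lra].
- by rewrite rsum_spike; field; lra.
- by apply: E_star_ge => t; rewrite stellar_abs2_spike //; lra.
- rewrite rsum_spike_sqr (_ : s = 1 - u ^ 2); last lra.
  by field; lra.
Qed.

Theorem mainTheorem9 (d : nat) (hd : (2 <= d)%N) (s : R) (hs : 0 < s <= 1) :
  (exists p : 'I_d -> R,
      prob_vec p /\ s <= E_star p /\
      1 - rsum (fun i => p i ^ 2) = s * (INR d - 1) / INR d)
  /\
  (forall p : 'I_d -> R,
      prob_vec p -> s <= E_star p ->
      s * (INR d - 1) / INR d <= 1 - rsum (fun i => p i ^ 2)).
Proof.
split; first exact: linear_entropy_bound_attained.
by move=> p hp; apply: linear_entropy_lower_bound.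
Qed.
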